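(* Let $M\ge 1$, and let $N_s,R_s$, and for each $m\in\{1,\dots,M\}$ let $N_{d,m},R_{d,m},D_m$ be positive integers, with $D=\sum_{m=1}^M D_m$. Let $P_t>0$, $\sigma_m>0$ and $\sigma_{e,m}\ge 0$ for each $m$. Let $\bar{\mathbf H}_m\in\mathbb C^{N_{d,m}\times N_s}$ be given matrices, let $\mathbf L\in\{0,1\}^{D\times D}$ be a fixed permutation matrix, and let $\mathbf A_m=[\mathbf 0_{D_m\times\sum_{i<m}D_i},\ \mathbf I_{D_m},\ \mathbf 0_{D_m\times\sum_{i>m}D_i}]$. The optimization variables are $\mathcal S=\{\{\mathbf P_m,\mathbf F_m\},\mathbf T,\mathbf W,\mathbf U\}$ with $\mathbf P_m\in\mathbb C^{D_m\times R_{d,m}}$, $\mathbf F_m\in\mathbb C^{R_{d,m}\times N_{d,m}}$, $\mathbf T\in\mathbb C^{N_s\times R_s}$, $\mathbf W\in\mathbb C^{R_s\times D}$, and $\mathbf U\in\mathbb C^{D\times D}$ lower triangular with all diagonal entries equal to $1$ (only its strictly lower triangular entries are free). Define $$\mathrm{MSE}=\sum_{m=1}^M \mathrm{tr}\Big(\mathbf P_m\mathbf F_m\bar{\mathbf H}_m\mathbf T\mathbf W\mathbf W^H\mathbf T^H\bar{\mathbf H}_m^H\mathbf F_m^H\mathbf P_m^H+\sigma_{e,m}^2\,\mathrm{tr}(\mathbf T\mathbf W\mathbf W^H\mathbf T^H)\,\mathbf P_m\mathbf F_m\mathbf F_m^H\mathbf P_m^H+\sigma_m^2\mathbf P_m\mathbf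 F_m\mathbf F_m^H\mathbf P_m^H-\mathbf P_m\mathbf F_m\bar{\mathbf H}_m\mathbf T\mathbf W\mathbf U^H\mathbf L\mathbf A_m^H-\mathbf A_m\mathbf L^T\mathbf U\mathbf W^H\mathbf T^H\bar{\mathbf H}_m^H\mathbf F_m^H\mathbf P_m^H\Big)+\mathrm{tr}(\mathbf U\mathbf U^H),$$ and, with $\hat{\mathbf H}_m=\bar{\mathbf H}_m/\sigma_m$ and $\hat\sigma_{e,m}=\sigma_{e,m}/\sigma_m$, $$\mathrm{MSE}_\sigma=\sum_{m=1}^M \mathrm{tr}\Big(\mathbf P_m\mathbf F_m\hat{\mathbf H}_m\mathbf T\mathbf W\mathbf W^H\mathbf T^H\hat{\mathbf H}_m^H\mathbf F_m^H\mathbf P_m^H+\hat\sigma_{e,m}^2\,\mathrm{tr}(\mathbf T\mathbf W\mathbf W^H\mathbf T^H)\,\mathbf P_m\mathbf F_m\mathbf F_m^H\mathbf P_m^H+\tfrac{1}{P_t}\mathrm{tr}(\mathbf T\mathbf W\mathbf W^H\mathbf T^H)\,\mathbf P_m\mathbf F_m\mathbf F_m^H\mathbf P_m^H-\mathbf P_m\mathbf F_m\hat{\mathbf H}_m\mathbf T\mathbf W\mathbf U^H\mathbf L\mathbf A_m^H-\mathbf A_m\mathbf L^T\mathbf U\mathbf W^H\mathbf T^H\hat{\mathbf H}_m^H\mathbf F_m^H\mathbf P_m^H\Big)+\mathrm{tr}(\mathbf U\mathbf U^H).$$ Consider problem (I): minimize $\mathrm{MSE}$ over $\mathcal S$ subject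 to $|[\mathbf F_m]_{i,j}|=1$ for all $m,i,j$, $|[\mathbf T]_{i,j}|=1$ for all $i,j$, and $\|\mathbf T\mathbf W\|^2\le P_t$; and problem (II): minimize $\mathrm{MSE}_\sigma$ over $\mathcal S$ subject only to $|[\mathbf F_m]_{i,j}|=1$ for all $m,i,j$ and $|[\mathbf T]_{i,j}|=1$ for all $i,j$. Let $(\{\mathbf P_m^\star,\mathbf F_m^\star\},\mathbf T^\star,\mathbf W^\star,\mathbf U^\star)$ be a KKT solution of problem (II), and let $a=\sqrt{P_t}/\|\mathbf T^\star\mathbf W^\star\|$. Then $(\{\tfrac{1}{a\sigma_m}\mathbf P_m^\star,\mathbf F_m^\star\},\mathbf T^\star,a\mathbf W^\star,\mathbf U^\star)$ is a KKT solution of problem (I).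
   Context: $\|\cdot\|$ denotes the Frobenius norm; $(\cdot)^H$ is conjugate transpose. KKT solutions are understood for the real optimization problems obtained by treating real and imaginary parts of the complex variables (equivalently, Wirtinger derivatives with respect to conjugate variables), with the unit-modulus conditions as equality constraints and $\|\mathbf T\mathbf W\|^2\le P_t$ as an inequality constraint. The scaling factor $a$ is defined by the given formula (so $\mathbf T^\star\mathbf W^\star\neq \mathbf 0$ is implicit). *)

From HB Require Import structures.
From mathcomp Require Import all_boot all_order all_algebra.
From mathcomp Require Import all_classical all_reals.
From mathcomp Require Import topology normedtype derive.
From mathcomp Require Import complex perm.

Set Implicit Arguments.
Unset Strict Implicit.
Unset Printing Implicit Defensive.

Import Order.TTheory GRing.Theory Num.Theory numFieldNormedType.Exports.
Local Open Scope ring_scope.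

Section Defs.
Variable R : realType.
Local Notation C := R[i].

Definition rC (x : R) : C := real_complex R x.

Definition mxH m n (A : 'M[C]_(m, n)) : 'M[C]_(n, m) := (map_mx (@conjc R) A)^T.

Definition sqmod (z : C) : R := complex.Re z ^+ 2 + complex.Im z ^+ 2.

Definition frob2 m n (A : 'M[C]_(m, n)) : R := \sum_i \sum_j sqmod (A i j).
Definition frob m n (A : 'M[C]_(m, n)) : R := Num.sqrt (frob2 A).

Definition unimod m n (A : 'M[C]_(m, n)) : Prop := forall i j, `|A i j| = 1.

Definition unit_lower n (U : 'M[C]_n) : Prop :=
  (forall i j : 'I_n, (i < j)%N -> U i j = 0) /\ (forall i : 'I_n, U i i = 1).

(* strictly lower triangular (admissible directions for U) *)
Definition strict_lower n (U : 'M[C]_n) : Prop :=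
  forall i j : 'I_n, (i <= j)%N -> U i j = 0.

Variables (M Ns Rs : nat) (Nd Rd Dm : 'I_M -> nat).
Local Notation D := (\sum_(m < M) Dm m)%N.

(* offset sum_{i<m} D_i and block selection matrix A_m = [0, I_{D_m}, 0] *)
Definition offset (m : 'I_M) : nat := (\sum_(i < M | (i < m)%N) Dm i)%N.
Definition selA (m : 'I_M) : 'M[C]_(Dm m, D) :=
  \matrix_(i, j) ((nat_of_ord j == offset m + i)%N)%:R.

Local Notation Ptype := (forall m : 'I_M, 'M[C]_(Dm m, Rd m)).
Local Notation Ftype := (forall m : 'I_M, 'M[C]_(Rd m, Nd m)).

Variables (Hb : forall m : 'I_M, 'M[C]_(Nd m, Ns)) (se sg : 'I_M -> R) (Pt : R)
  (L : 'M[C]_D).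

(* MSE (real-valued; the trace expression is real, we take its real part) *)
Definition mse (P : Ptype) (F : Ftype) (T : 'M[C]_(Ns, Rs)) (W : 'M[C]_(Rs, D))
  (U : 'M[C]_D) : R :=
  complex.Re (\sum_(m < M) \tr (
        P m *m F m *m Hb m *m T *m W *m mxH W *m mxH T *m mxH (Hb m)
            *m mxH (F m) *m mxH (P m)
      + (rC (se m ^+ 2) * \tr (T *m W *m mxH W *m mxH T))
            *: (P m *m F m *m mxH (F m) *m mxH (P m))
      + rC (sg m ^+ 2) *: (P m *m F m *m mxH (F m) *m mxH (P m))
      - P m *m F m *m Hb m *m T *m W *m mxH U *m L *m mxH (selA m)
      - selA m *m L^T *m U *m mxH W *m mxH T *m mxH (Hb m) *m mxH (F m)
            *m mxH (P m))
      + \tr (U *m mxH U)).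

Definition mse_sig (P : Ptype) (F : Ftype) (T : 'M[C]_(Ns, Rs)) (W : 'M[C]_(Rs, D))
  (U : 'M[C]_D) : R :=
  let Hh := fun m => rC (sg m)^-1 *: Hb m in
  let seh := fun m => se m / sg m in
  complex.Re (\sum_(m < M) \tr (
        P m *m F m *m Hh m *m T *m W *m mxH W *m mxH T *m mxH (Hh m)
            *m mxH (F m) *m mxH (P m)
      + (rC (seh m ^+ 2) * \tr (T *m W *m mxH W *m mxH T))
            *: (P m *m F m *m mxH (F m) *m mxH (P m))
      + (rC Pt^-1 * \tr (T *m W *m mxH W *m mxH T))
            *: (P m *m F m *m mxH (F m) *m mxH (P m))
      - P m *m F m *m Hh m *m T *m W *m mxH U *m L *m mxH (selA m)
      - selA m *m L^T *m U *m mxH W *m mxH T *m mxH (Hh m) *m mxH (F m)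
            *m mxH (P m))
      + \tr (U *m mxH U)).

Definition lagI (lamF : forall m : 'I_M, 'I_(Rd m) -> 'I_(Nd m) -> R)
  (lamT : 'I_Ns -> 'I_Rs -> R) (mu : R)
  (P : Ptype) (F : Ftype) (T : 'M[C]_(Ns, Rs)) (W : 'M[C]_(Rs, D)) (U : 'M[C]_D) : R :=
  mse P F T W U
  + \sum_(m < M) \sum_i \sum_j lamF m i j * (sqmod (F m i j) - 1)
  + \sum_i \sum_j lamT i j * (sqmod (T i j) - 1)
  + mu * (frob2 (T *m W) - Pt).

Definition lagII (lamF : forall m : 'I_M, 'I_(Rd m) -> 'I_(Nd m) -> R)
  (lamT : 'I_Ns -> 'I_Rs -> R)
  (P : Ptype) (F : Ftype) (T : 'M[C]_(Ns, Rs)) (W : 'M[C]_(Rs, D)) (U : 'M[C]_D) : R :=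
  mse_sig P F T W U
  + \sum_(m < M) \sum_i \sum_j lamF m i j * (sqmod (F m i j) - 1)
  + \sum_i \sum_j lamT i j * (sqmod (T i j) - 1).

(* Stationarity of a real-valued function of the (real and imaginary parts of the)
   variables: every directional derivative exists and vanishes, the free directions
   for U being the strictly lower triangular matrices. *)
Definition stationary
  (Lag : Ptype -> Ftype -> 'M[C]_(Ns, Rs) -> 'M[C]_(Rs, D) -> 'M[C]_D -> R)
  (P : Ptype) (F : Ftype) (T : 'M[C]_(Ns, Rs)) (W : 'M[C]_(Rs, D)) (U : 'M[C]_D) : Prop :=
  forall (dP : Ptype) (dF : Ftype) (dT : 'M[C]_(Ns, Rs)) (dW : 'M[C]_(Rs, D))
         (dU : 'M[C]_D),
    strict_lower dU ->
    is_derive (0 : R) (1 : R)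
      (fun t : R => Lag (fun m => P m + rC t *: dP m) (fun m => F m + rC t *: dF m)
                        (T + rC t *: dT) (W + rC t *: dW) (U + rC t *: dU))
      (0 : R).

Definition KKT_I (P : Ptype) (F : Ftype) (T : 'M[C]_(Ns, Rs)) (W : 'M[C]_(Rs, D))
  (U : 'M[C]_D) : Prop :=
  [/\ forall m, unimod (F m), unimod T, unit_lower U, frob2 (T *m W) <= Pt &
      exists lamF lamT mu, [/\ 0 <= mu, mu * (frob2 (T *m W) - Pt) = 0 &
        stationary (lagI lamF lamT mu) P F T W U]].

Definition KKT_II (P : Ptype) (F : Ftype) (T : 'M[C]_(Ns, Rs)) (W : 'M[C]_(Rs, D))
  (U : 'M[C]_D) : Prop :=
  [/\ forall m, unimod (F m), unimod T, unit_lower U &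
      exists lamF lamT, stationary (lagII lamF lamT) P F T W U].

End Defs.

From HB Require Import structures.
From mathcomp Require Import all_boot all_order all_algebra.
From mathcomp Require Import all_classical all_reals.
From mathcomp Require Import topology normedtype derive.
From mathcomp Require Import complex perm.
From mathcomp Require Import ring.
Import Order.TTheory GRing.Theory Num.Theory numFieldNormedType.Exports.
Local Open Scope ring_scope.

(* Substituting [P_m = P*_m / (a sg_m)] and [W = a W*] multiplies every product
   [P_m F_m Hb_m T W] by [1 / sg_m], so the MSE at the scaled point is MSE_sigma at
   the original one plus [(a^-2 - |TW|^2 / Pt) * sum_m |P_m F_m|^2].  Keep the
   unit-modulus multipliers of (II) and take the power multiplier
   [mu = sum_m |P*_m F*_m|^2 / (Pt a^2)]: along every line through the scaled
   point, the Lagrangian of (I) is that of (II) along a rescaled line plus a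
   polynomial correction, whose derivative at the point vanishes because
   [a^2 |T* W*|^2 = Pt].  The same identity gives feasibility and complementary
   slackness of the power constraint. *)

Set Implicit Arguments.
Unset Strict Implicit.
Unset Printing Implicit Defensive.

Lemma scale_affine (K : comPzRingType) (V : lmodType K) (k l t : K) (x v : V) :
  k * l = 1 -> k *: x + t *: v = k *: (x + t *: (l *: v)).
Proof. by move=> kl; rewrite scalerDr !scalerA mulrAC kl mul1r. Qed.

Section ComplexMatrix.
Variable R : realType.
Local Notation C := R[i].
Local Notation Re := (@complex.Re R).

Lemma sqmod_ge0 (z : C) : 0 <= sqmod z.
Proof. by rewrite addr_ge0 ?sqr_ge0. Qed.

Lemma sqmod_eq0 (z : C) : sqmod z = 0 -> z = 0.
Proof.
case: z => u v /eqP; rewrite /sqmod paddr_eq0 ?sqr_ge0 // !sqrf_eq0.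
by case/andP=> /eqP /= -> /eqP ->.
Qed.

Lemma sqmod_rCM (x : R) (z : C) : sqmod (rC x * z) = x ^+ 2 * sqmod z.
Proof. by case: z => u v; rewrite /sqmod /rC /= !mul0r subr0 addr0; ring. Qed.

Lemma mulcJ_sqmod (z : C) : z * (z^*)%C = rC (sqmod z).
Proof. by case: z => u v; rewrite /rC /sqmod /=; congr Complex; ring. Qed.

Lemma mxH_mul m n p (A : 'M[C]_(m, n)) (B : 'M[C]_(n, p)) :
  mxH (A *m B) = mxH B *m mxH A.
Proof. by rewrite /mxH map_mxM trmx_mul. Qed.

Lemma mulmx_mxH_mul k m n p (X : 'M[C]_(k, n)) (A : 'M[C]_(p, m)) (B : 'M[C]_(m, n)) :
  X *m mxH B *m mxH A = X *m mxH (A *m B).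
Proof. by rewrite mxH_mul mulmxA. Qed.

Lemma mxtrace_mul_mxH m n (A : 'M[C]_(m, n)) : \tr (A *m mxH A) = rC (frob2 A).
Proof.
rewrite /mxtrace /frob2 /rC raddf_sum; apply: eq_bigr => i _.
by rewrite mxE raddf_sum; apply: eq_bigr => j _; rewrite !mxE mulcJ_sqmod.
Qed.

Lemma frob2_ge0 m n (A : 'M[C]_(m, n)) : 0 <= frob2 A.
Proof. by apply: sumr_ge0 => i _; apply: sumr_ge0 => j _; apply: sqmod_ge0. Qed.

Lemma frob2_gt0 m n (A : 'M[C]_(m, n)) : A != 0 -> 0 < frob2 A.
Proof.
rewrite lt_def frob2_ge0 andbT; apply: contraNneq => A0.
apply/eqP/matrixP => i j; rewrite mxE; apply: sqmod_eq0.
have rowA0 : \sum_j sqmod (A i j) = 0.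
  by apply: (psumr_eq0P _ A0) => // k _; apply: sumr_ge0 => l _; apply: sqmod_ge0.
by apply: (psumr_eq0P _ rowA0) => // k _; apply: sqmod_ge0.
Qed.

Lemma frob2Z m n (x : R) (A : 'M[C]_(m, n)) : frob2 (rC x *: A) = x ^+ 2 * frob2 A.
Proof.
rewrite /frob2 mulr_sumr; apply: eq_bigr => i _; rewrite mulr_sumr.
by apply: eq_bigr => j _; rewrite mxE sqmod_rCM.
Qed.

Lemma mxtrace_sum5_congr n (X1 X4 X5 Y1 Y4 Y5 G G' : 'M[C]_n) (k2 k3 l2 l3 c : C) :
  X1 = Y1 -> X4 = Y4 -> X5 = Y5 -> (k2 + k3) * \tr G = (l2 + l3) * \tr G' + c ->
  \tr (X1 + k2 *: G + k3 *: G - X4 - X5) = \tr (Y1 + l2 *: G' + l3 *: G' - Y4 - Y5) + c.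
Proof.
move=> -> -> -> e23; rewrite !(raddfD, raddfN) /= !mxtraceZ.
by rewrite -!addrA [k2 * _ + _]addrA -mulrDl e23; ring.
Qed.

(* [P' F H T W'] with [P' = P / (a s)] and [W' = a W] equals [P F (H / s) T W]:
   the signal and cross terms agree and only the noise terms differ. *)
Lemma mse_term_scaled (d r n ns rs D : nat) (P : 'M[C]_(d, r)) (F : 'M[C]_(r, n))
  (H : 'M[C]_(n, ns)) (T : 'M[C]_(ns, rs)) (W : 'M[C]_(rs, D)) (U L : 'M[C]_D)
  (A : 'M[C]_(d, D)) (e : R) {a s pt : R} :
  a != 0 -> s != 0 -> pt != 0 ->
  \tr ((rC (a * s)^-1 *: P) *m F *m H *m T *m (rC a *: W) *m mxH (rC a *: W)
          *m mxH T *m mxH H *m mxH F *m mxH (rC (a * s)^-1 *: P)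
      + (rC (e ^+ 2) * \tr (T *m (rC a *: W) *m mxH (rC a *: W) *m mxH T))
          *: ((rC (a * s)^-1 *: P) *m F *m mxH F *m mxH (rC (a * s)^-1 *: P))
      + rC (s ^+ 2) *: ((rC (a * s)^-1 *: P) *m F *m mxH F *m mxH (rC (a * s)^-1 *: P))
      - (rC (a * s)^-1 *: P) *m F *m H *m T *m (rC a *: W) *m mxH U *m L *m mxH A
      - A *m L^T *m U *m mxH (rC a *: W) *m mxH T *m mxH H *m mxH F
          *m mxH (rC (a * s)^-1 *: P))
  = \tr (P *m F *m (rC s^-1 *: H) *m T *m W *m mxH W *m mxH T *m mxH (rC s^-1 *: H)
          *m mxH F *m mxH P
      + (rC ((e / s) ^+ 2) * \tr (T *m W *m mxH W *m mxH T))
          *: (P *m F *m mxH F *m mxH P)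
      + (rC pt^-1 * \tr (T *m W *m mxH W *m mxH T)) *: (P *m F *m mxH F *m mxH P)
      - P *m F *m (rC s^-1 *: H) *m T *m W *m mxH U *m L *m mxH A
      - A *m L^T *m U *m mxH W *m mxH T *m mxH (rC s^-1 *: H) *m mxH F *m mxH P)
    + rC ((a ^- 2 - frob2 (T *m W) / pt) * frob2 (P *m F)).
Proof.
move=> a0 s0 pt0.
have chainE : (rC (a * s)^-1 *: P) *m F *m H *m T *m (rC a *: W)
    = P *m F *m (rC s^-1 *: H) *m T *m W.
  by rewrite -!(scalemxAl, scalemxAr) scalerA /rC -rmorphM invfM mulrAC mulVf ?mul1r.
apply: mxtrace_sum5_congr; rewrite ?mulmx_mxH_mul ?chainE //.
rewrite !mxtrace_mul_mxH -scalemxAr -scalemxAl !frob2Z.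
rewrite /rC -!(rmorphM, rmorphD); apply: (congr1 (real_complex R)).
by field; rewrite a0 s0 pt0.
Qed.

End ComplexMatrix.

Section PolynomialFunctions.
Variable R : realType.
Local Notation C := R[i].
Local Notation Re := (@complex.Re R).

Definition polyfun (f : R -> R) := exists p : {poly R}, f =1 horner p.

Lemma polyfun_sum (I : finType) (f : I -> R -> R) :
  (forall i, polyfun (f i)) -> polyfun (fun t => \sum_i f i t).
Proof.
move=> /fin_all_exists [p pE]; exists (\sum_i p i) => t.
by rewrite horner_sum; apply: eq_bigr => i _; apply: pE.
Qed.

Lemma Re_horner_rC (q : {poly C}) (t : R) : Re q.[rC t] = (map_poly Re q).[t].
Proof.
rewrite horner_coef (horner_coef_wide _ (size_poly _ _)).
rewrite (raddf_sum (Re : Rcomplex R -> R)); apply: eq_bigr => i _.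
by rewrite coef_map_id0 // /rC -rmorphXn; case: (q`_i) => u v; rewrite /= mulr0 subr0.
Qed.

Lemma polyfun_sqmod_horner (p : {poly C}) : polyfun (fun t => sqmod p.[rC t]).
Proof.
exists (map_poly Re (p * map_poly conjc p)) => t /=.
have rCJ : ((rC t)^*)%C = rC t := conjc_real t.
by rewrite -Re_horner_rC hornerM -{3}rCJ horner_map mulcJ_sqmod.
Qed.

Lemma polyfun_frob2_mul_affine m n p (A dA : 'M[C]_(m, n)) (B dB : 'M[C]_(n, p)) :
  polyfun (fun t => frob2 ((A + rC t *: dA) *m (B + rC t *: dB))).
Proof.
apply: polyfun_sum => i; apply: polyfun_sum => j.
pose e := \sum_k ((A i k)%:P + 'X * (dA i k)%:P) * ((B k j)%:P + 'X * (dB k j)%:P).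
have [q qE] := polyfun_sqmod_horner e.
exists q => t; rewrite -qE /= mxE horner_sum.
by congr sqmod; apply: eq_bigr => k _; rewrite !mxE !hornerE.
Qed.

End PolynomialFunctions.

Lemma is_derive_scaling_correction (R : realFieldType) (pN pS : {poly R}) (a Pt : R) :
  Pt != 0 -> a ^+ 2 * pN.[0] = Pt ->
  is_derive (0 : R) (1 : R)
    (fun t => (a ^- 2 - pN.[t] / Pt) * pS.[t]
              + pS.[0] / (Pt * a ^+ 2) * (a ^+ 2 * pN.[t] - Pt)) 0.
Proof.
move=> Pt0 a2N.
have a0 : a != 0 by apply: contra_neq Pt0 => a0; rewrite -a2N a0 expr0n mul0r.
have pN0 : pN.[0] = Pt / a ^+ 2 by rewrite -a2N [a ^+ 2 * _]mulrC mulfK ?expf_neq0.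
pose q := ((a ^- 2)%:P - pN * (Pt^-1)%:P) * pS
          + (pS.[0] / (Pt * a ^+ 2))%:P * ((a ^+ 2)%:P * pN - Pt%:P).
have -> : (fun t => (a ^- 2 - pN.[t] / Pt) * pS.[t]
              + pS.[0] / (Pt * a ^+ 2) * (a ^+ 2 * pN.[t] - Pt)) = horner q.
  by apply: funext => t; rewrite /q !(hornerD, hornerN, hornerM, hornerC).
apply: (is_derive_eq (is_derive_poly q 0)).
rewrite /q !(derivD, derivN, derivM, derivC) !(hornerD, hornerN, hornerM, hornerC) pN0.
by field; rewrite Pt0 a0.
Qed.

Section Scaling.
Variable R : realType.
Local Notation C := R[i].
Local Notation Re := (@complex.Re R).
Variables (M Ns Rs : nat) (Nd Rd Dm : 'I_M -> nat).
Local Notation D := (\sum_(m < M) Dm m)%N.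
Variables (Hb : forall m : 'I_M, 'M[C]_(Nd m, Ns)) (se sg : 'I_M -> R) (Pt : R)
  (L : 'M[C]_D).
Hypotheses (sg_neq0 : forall m, sg m != 0) (Pt_neq0 : Pt != 0).

Lemma mse_scaled (a : R) (P : forall m, 'M[C]_(Dm m, Rd m))
  (F : forall m, 'M[C]_(Rd m, Nd m)) (T : 'M[C]_(Ns, Rs)) (W : 'M[C]_(Rs, D))
  (U : 'M[C]_D) :
  a != 0 ->
  mse Hb se sg L (fun m => rC (a * sg m)^-1 *: P m) F T (rC a *: W) U =
  mse_sig Hb se sg Pt L P F T W U
  + (a ^- 2 - frob2 (T *m W) / Pt) * \sum_m frob2 (P m *m F m).
Proof.
move=> a0; rewrite /mse /mse_sig.
rewrite (eq_bigr _ (fun m _ =>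
  mse_term_scaled _ _ _ _ _ _ _ _ (se m) a0 (sg_neq0 m) Pt_neq0)).
rewrite big_split /= addrAC (raddfD (Re : Rcomplex R -> R)); congr (_ + _).
by rewrite (raddf_sum (Re : Rcomplex R -> R)) mulr_sumr.
Qed.

Lemma lagI_scaled lamF lamT (mu a : R) (P : forall m, 'M[C]_(Dm m, Rd m))
  (F : forall m, 'M[C]_(Rd m, Nd m)) (T : 'M[C]_(Ns, Rs)) (W : 'M[C]_(Rs, D))
  (U : 'M[C]_D) :
  a != 0 ->
  lagI Hb se sg Pt L lamF lamT mu
    (fun m => rC (a * sg m)^-1 *: P m) F T (rC a *: W) U =
  lagII Hb se sg Pt L lamF lamT P F T W U
  + ((a ^- 2 - frob2 (T *m W) / Pt) * \sum_m frob2 (P m *m F m)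
     + mu * (a ^+ 2 * frob2 (T *m W) - Pt)).
Proof. by move=> a0; rewrite /lagI /lagII mse_scaled // -scalemxAr frob2Z; ring. Qed.

Lemma stationary_scaled lamF lamT (a : R) (P : forall m, 'M[C]_(Dm m, Rd m))
  (F : forall m, 'M[C]_(Rd m, Nd m)) (T : 'M[C]_(Ns, Rs)) (W : 'M[C]_(Rs, D))
  (U : 'M[C]_D) :
  a ^+ 2 * frob2 (T *m W) = Pt ->
  stationary (lagII Hb se sg Pt L lamF lamT) P F T W U ->
  stationary
    (lagI Hb se sg Pt L lamF lamT ((\sum_m frob2 (P m *m F m)) / (Pt * a ^+ 2)))
    (fun m => rC (a * sg m)^-1 *: P m) F T (rC a *: W) U.
Proof.
move=> a2N stII dP dF dT dW dU dU_lower.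
have a0 : a != 0 by apply: contra_neq Pt_neq0 => a0; rewrite -a2N a0 expr0n mul0r.
have rCVr x : x != 0 -> rC x^-1 * rC x = 1.
  by move=> x0; rewrite /rC -rmorphM mulVf ?rmorph1.
pose dP' m := rC (a * sg m) *: dP m.
pose dW' := rC a^-1 *: dW.
have [pS pSE] : polyfun (fun t =>
    \sum_m frob2 ((P m + rC t *: dP' m) *m (F m + rC t *: dF m))).
  by apply: polyfun_sum => m; apply: polyfun_frob2_mul_affine.
have [pN pNE] := polyfun_frob2_mul_affine T dT W dW'.
have line0 m n (X dX : 'M[C]_(m, n)) : X + rC 0 *: dX = X.
  by rewrite /rC rmorph0 scale0r addr0.
have pS0 : pS.[0] = \sum_m frob2 (P m *m F m).
  by rewrite -pSE; apply: eq_bigr => m _; rewrite !line0.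
have pN0 : pN.[0] = frob2 (T *m W) by rewrite -pNE !line0.
have lineE t :
  lagI Hb se sg Pt L lamF lamT ((\sum_m frob2 (P m *m F m)) / (Pt * a ^+ 2))
    (fun m => rC (a * sg m)^-1 *: P m + rC t *: dP m) (fun m => F m + rC t *: dF m)
    (T + rC t *: dT) (rC a *: W + rC t *: dW) (U + rC t *: dU) =
  lagII Hb se sg Pt L lamF lamT
    (fun m => P m + rC t *: dP' m) (fun m => F m + rC t *: dF m)
    (T + rC t *: dT) (W + rC t *: dW') (U + rC t *: dU)
  + ((a ^- 2 - pN.[t] / Pt) * pS.[t]
     + pS.[0] / (Pt * a ^+ 2) * (a ^+ 2 * pN.[t] - Pt)).
  have -> : (fun m => rC (a * sg m)^-1 *: P m + rC t *: dP m)
          = (fun m => rC (a * sg m)^-1 *: (P m + rC t *: dP' m)).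
    apply: boolp.functional_extensionality_dep => m.
    by apply: scale_affine; rewrite rCVr // mulf_neq0.
  have -> : rC a *: W + rC t *: dW = rC a *: (W + rC t *: dW').
    by apply: scale_affine; rewrite mulrC rCVr.
  by rewrite lagI_scaled // pSE pNE pS0.
rewrite (funext lineE) -[0 in X in is_derive _ _ _ X](addr0 0).
apply: is_deriveD; first exact: stII.
by apply: is_derive_scaling_correction; rewrite // pN0.
Qed.

End Scaling.

Theorem theorem1 (R : realType) (M Ns Rs : nat) (Nd Rd Dm : 'I_M -> nat)
  (hM : (0 < M)%N) (hNs : (0 < Ns)%N) (hRs : (0 < Rs)%N)
  (hNd : forall m, (0 < Nd m)%N) (hRd : forall m, (0 < Rd m)%N)
  (hDm : forall m, (0 < Dm m)%N)
  (Pt : R) (se sg : 'I_M -> R)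
  (hPt : 0 < Pt) (hsg : forall m, 0 < sg m) (hse : forall m, 0 <= se m)
  (Hb : forall m : 'I_M, 'M[R[i]]_(Nd m, Ns))
  (s : {perm 'I_(\sum_(m < M) Dm m)})
  (P : forall m : 'I_M, 'M[R[i]]_(Dm m, Rd m))
  (F : forall m : 'I_M, 'M[R[i]]_(Rd m, Nd m))
  (T : 'M[R[i]]_(Ns, Rs)) (W : 'M[R[i]]_(Rs, \sum_(m < M) Dm m))
  (U : 'M[R[i]]_(\sum_(m < M) Dm m)) :
  KKT_II Hb se sg Pt (perm_mx s) P F T W U ->
  T *m W != 0 ->
  let a := Num.sqrt Pt / frob (T *m W) in
  KKT_I Hb se sg Pt (perm_mx s)
    (fun m => rC (a * sg m)^-1 *: P m) F T (rC a *: W) U.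
Proof.
move=> [unimodF unimodT lowerU [lamF [lamT stII]]] TW_neq0 a.
have a2N : a ^+ 2 * frob2 (T *m W) = Pt.
  by rewrite /a /frob expr_div_n !sqr_sqrtr ?frob2_ge0 ?ltW // divfK ?gt_eqF ?frob2_gt0.
have powerE : frob2 (T *m (rC a *: W)) = Pt by rewrite -scalemxAr frob2Z.
split=> //; first by rewrite powerE.
exists lamF, lamT, ((\sum_m frob2 (P m *m F m)) / (Pt * a ^+ 2)); split.
- apply: divr_ge0; first by apply: sumr_ge0 => m _; apply: frob2_ge0.
  by rewrite mulr_ge0 ?sqr_ge0 ?ltW.
- by rewrite powerE subrr mulr0.
- by apply: stationary_scaled => // [m|]; apply: lt0r_neq0.
Qed.
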